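(* Let $\rho$ be a representation of $D^{2,2,2}$ and let $\{i,j,k\}=\{1,2,3\}$. With the notation of the context: 1. $\psi_i(x_i)=X^1_0$; 2. $\psi_i(x_j)=\psi_k(x_j)=\nu^0(y_iy_k)$; 3. $\psi_i(y_i)=\nu^0(x_i(y_j+y_k))$; 4. $\psi_i(y_j)=\nu^0(y_i(x_j+y_k))$; 5. $\psi_i(I)=\nu^0(y_i(y_j+y_k))$; 6. $\psi_i(y_jy_k)=\nu^0(y_i(x_j+x_k))$.
   Context: $D^{2,2,2}$ is the modular lattice generated by $x_1,y_1,x_2,y_2,x_3,y_3$ subject only to $x_i\subseteq y_i$ ($i=1,2,3$), with a greatest element $I$ adjoined. Meet is written $ab$, join $a+b$. A representation $\rho$ of $D^{2,2,2}$ in a finite-dimensional vector space $X_0$ is a lattice morphism from $D^{2,2,2}$ to the lattice of subspaces of $X_0$, with $\rho(I)=X_0$. Write $X_i=\rho(x_i)\subseteq Y_i=\rho(y_i)$. Put $R=Y_1\oplus Y_2\oplus Y_3$ (triples $(\eta_1,\eta_2,\eta_3)$ with $\eta_i\in Y_i$) and $X^1_0=\{(\eta_1,\eta_2,\eta_3)\in R:\sum\eta_i=0\}$. Define subspaces of $R$: - $G_i$: triples with $i$-th coordinate in $Y_i$ and other coordinates $0$; - $H_i$: triples with $i$-th coordinate in $X_i$ and other coordinates $0$; - $G'_i$: triples with $i$-th coordinate in $X_i$ and other coordinates arbitrary in the respective $Y$'s; - $H'_i$: triples with $i$-th coordinate $0$. The representation $\Phi^+\rho$ of $D^{2,2,2}$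 in $X^1_0$ is given by $\Phi^+\rho(y_i)=G'_i\cap X^1_0$, $\Phi^+\rho(x_i)=H'_i\cap X^1_0$ and $\Phi^+\rho(I)=X^1_0$. Set $\nu^1(a)=\Phi^+\rho(a)$, viewed as a subspace of $R$. $\nu^0$ is the representation of $D^{2,2,2}$ in $R$ with $\nu^0(y_i)=X^1_0+G_i$, $\nu^0(x_i)=X^1_0+H_i$, $\nu^0(I)=R$. The joint maps are defined by $\psi_i(a)=X^1_0+G_i\cap(H'_i+\nu^1(a))$ for $a\in D^{2,2,2}$. *)

From HB Require Import structures.
From mathcomp Require Import all_boot all_order all_algebra.
Set Implicit Arguments. Unset Strict Implicit. Unset Printing Implicit Defensive.
Import GRing.Theory.
Local Open Scope ring_scope.
Local Open Scope vspace_scope.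

(* Lattice terms over the generators of D^{2,2,2}: x_i, y_i (i : 'I_3),
   the adjoined top element I, meets and joins. *)
Inductive dterm : Type :=
  | tx of 'I_3
  | ty of 'I_3
  | tI
  | tmeet of dterm & dterm
  | tjoin of dterm & dterm.

(* A representation of
   D^{2,2,2} is exactly such an evaluation (with images of x_i inside
   images of y_i, all inside the image of I). *)
Fixpoint deval (K : fieldType) (W : vectType K)
    (gx gy : 'I_3 -> {vspace W}) (top : {vspace W}) (a : dterm) : {vspace W} :=
  match a with
  | tx i => gx i
  | ty i => gy i
  | tI => top
  | tmeet a b => (deval gx gy top a :&: deval gx gy top b)%VS
  | tjoin a b => (deval gx gy top a + deval gx gy top b)%VS
  end.

Section Construction.
Variables (K : fieldType) (V : vectType K).
Variables (Xs Ys : 'I_3 -> {vspace V}).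

Definition trip := {ffun 'I_3 -> V}.

Definition injc (i : 'I_3) : 'Hom(V, trip) :=
  linfun (fun v : V => [ffun j : 'I_3 => if j == i then v else 0%R] : trip).
Definition projc (i : 'I_3) : 'Hom(trip, V) := linfun (fun f : trip => f i).
Definition sumc : 'Hom(trip, V) := linfun (fun f : trip => (\sum_(i < 3) f i)%R).

Definition Gsp (i : 'I_3) : {vspace trip} := (injc i @: Ys i)%VS.
Definition Hsp (i : 'I_3) : {vspace trip} := (injc i @: Xs i)%VS.
Definition Rsp : {vspace trip} := (\sum_(i < 3) Gsp i)%VS.
Definition X10 : {vspace trip} := (Rsp :&: lker sumc)%VS.
Definition Gpsp (i : 'I_3) : {vspace trip} := (Rsp :&: (projc i @^-1: Xs i))%VS.
Definition Hpsp (i : 'I_3) : {vspace trip} := (Rsp :&: lker (projc i))%VS.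

(* nu^1 = Phi^+ rho, viewed inside R *)
Definition nu1 (a : dterm) : {vspace trip} :=
  deval (fun i => Hpsp i :&: X10)%VS (fun i => Gpsp i :&: X10)%VS X10 a.
Definition nu0 (a : dterm) : {vspace trip} :=
  deval (fun i => X10 + Hsp i)%VS (fun i => X10 + Gsp i)%VS Rsp a.
Definition psi (i : 'I_3) (a : dterm) : {vspace trip} :=
  (X10 + (Gsp i :&: (Hpsp i + nu1 a)))%VS.

End Construction.

From HB Require Import structures.
From mathcomp Require Import all_boot all_order all_algebra.
Import GRing.Theory.
Local Open Scope ring_scope.
Local Open Scope vspace_scope.
Set Implicit Arguments. Unset Strict Implicit.

(* Both sides of each identity are preimages under the sum map R -> V:
   nu^0(a) is the preimage of rho(a), and psi_i(a) is the preimage of the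
   i-th projection of nu^1(a).  The nu^1 images of the terms
   involved are "boxes", the zero-sum triples whose coordinates lie in
   prescribed subspaces Z_l, and the i-th projection of such a box is
   Y_i Z_i (Y_j Z_j + Y_k Z_k), because eta_i = -(eta_j + eta_k). *)

Lemma linfun_linearE (K : fieldType) (aT rT : vectType K) (f : aT -> rT) :
  linear f -> linfun f =1 f.
Proof.
move=> lf v.
pose F : {linear aT -> rT} := HB.pack f (GRing.isLinear.Build K aT rT *:%R f lf).
exact: (lfunE F v).
Qed.

Lemma ord3_distinct_cases (i j k l : 'I_3) : i != j -> i != k -> j != k ->
  [\/ l = i, l = j | l = k].
Proof.
case: i => [[|[|[|?]]] ?] //; case: j => [[|[|[|?]]] ?] //;
case: k => [[|[|[|?]]] ?] //; case: l => [[|[|[|?]]] ?] // _ _ _;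
first [ by constructor 1; apply: val_inj
      | by constructor 2; apply: val_inj
      | by constructor 3; apply: val_inj ].
Qed.

Lemma big_ord3_distinct (M : nmodType) (i j k : 'I_3) (f : 'I_3 -> M) :
  i != j -> i != k -> j != k -> (\sum_(l < 3) f l = f i + f j + f k)%R.
Proof.
move=> hij hik hjk.
rewrite (bigD1 i) //= (bigD1 j) 1?eq_sym //= (bigD1 k) /=; last first.
  by rewrite ![k == _]eq_sym (negbTE hik) (negbTE hjk).
rewrite big1 ?addr0 ?addrA // => l.
by case: (ord3_distinct_cases l hij hik hjk) => ->; rewrite eqxx ?andbF.
Qed.

Section Construction.
Variables (K : fieldType) (V : vectType K) (Xs Ys : 'I_3 -> {vspace V}).

Lemma injcE (i : 'I_3) (v : V) :
  injc V i v = [ffun l : 'I_3 => if l == i then v else 0%R] :> trip V.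
Proof.
rewrite /injc linfun_linearE // => a x y; apply/ffunP=> l; rewrite !ffunE.
by case: (l == i); rewrite ?scaler0 ?addr0.
Qed.

Lemma projcE (i : 'I_3) (f : trip V) : projc V i f = f i.
Proof. by rewrite /projc linfun_linearE // => a x y; rewrite !ffunE. Qed.

Lemma sumcE (f : trip V) : sumc V f = (\sum_(l < 3) f l)%R.
Proof.
rewrite /sumc linfun_linearE // => a x y.
by rewrite scaler_sumr -big_split; apply: eq_bigr => l _; rewrite !ffunE.
Qed.

Lemma sumc_injc (i : 'I_3) (v : V) : sumc V (injc V i v) = v.
Proof.
rewrite sumcE (bigD1 i) //= big1 => [|m ne]; rewrite injcE ffunE ?eqxx ?addr0 //.
by rewrite (negbTE ne).
Qed.

Lemma memv_Gsp (i : 'I_3) (g : trip V) :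
  (g \in Gsp Ys i) = (g i \in Ys i) && [forall l, (l != i) ==> (g l == 0%R)].
Proof.
apply/memv_imgP/andP => [[y yY ->]|[gY /forallP gi]].
  rewrite injcE ffunE eqxx; split=> //; apply/forallP=> l; apply/implyP=> ne.
  by rewrite ffunE (negbTE ne).
exists (g i) => //; apply/ffunP=> l; rewrite injcE ffunE.
case: eqP => [->|/eqP ne] //.
by move/implyP: (gi l) => /(_ ne)/eqP.
Qed.

Lemma memv_Rsp (f : trip V) : (f \in Rsp Ys) = [forall l, f l \in Ys l].
Proof.
apply/memv_sumP/forallP => [[vs Hvs ->] l|fY].
  rewrite sum_ffunE (bigD1 l) //= big1 ?addr0 => [|m ne].
    by have := Hvs l isT; rewrite memv_Gsp => /andP[].
  have := Hvs m isT; rewrite memv_Gsp => /andP[_ /forallP/(_ l)].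
  by rewrite eq_sym ne => /eqP.
exists (fun m => injc V m (f m)) => [m _|]; first exact/memv_img/fY.
apply/ffunP=> l; rewrite sum_ffunE (bigD1 l) //= big1 => [|m ne].
  by rewrite injcE ffunE eqxx addr0.
by rewrite injcE ffunE eq_sym (negbTE ne).
Qed.

Lemma Rsp_coord (f : trip V) (l : 'I_3) : f \in Rsp Ys -> f l \in Ys l.
Proof. by rewrite memv_Rsp => /forallP. Qed.

Lemma injc_Rsp (i : 'I_3) (v : V) : v \in Ys i -> injc V i v \in Rsp Ys.
Proof.
move=> vY; rewrite memv_Rsp; apply/forallP=> l; rewrite injcE ffunE.
by case: eqP => [->|] //; rewrite mem0v.
Qed.

Lemma memv_X10 (f : trip V) :
  (f \in X10 Ys) = (f \in Rsp Ys) && (sumc V f == 0%R).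
Proof. by rewrite /X10 memv_cap memv_ker. Qed.

Lemma memv_Gpsp (i : 'I_3) (f : trip V) :
  (f \in Gpsp Xs Ys i) = (f \in Rsp Ys) && (f i \in Xs i).
Proof. by rewrite /Gpsp memv_cap -memv_preim projcE. Qed.

Lemma memv_Hpsp (i : 'I_3) (f : trip V) :
  (f \in Hpsp Ys i) = (f \in Rsp Ys) && (f i == 0%R).
Proof. by rewrite /Hpsp memv_cap memv_ker projcE. Qed.

Definition sumc_preim (S : {vspace V}) : {vspace trip V} :=
  Rsp Ys :&: (sumc V @^-1: S).

Lemma memv_sumc_preim (S : {vspace V}) (f : trip V) :
  (f \in sumc_preim S) = (f \in Rsp Ys) && (sumc V f \in S).
Proof. by rewrite /sumc_preim memv_cap -memv_preim. Qed.

Lemma sumc_preim0 : sumc_preim 0 = X10 Ys.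
Proof.
by apply/vspaceP=> f; rewrite memv_sumc_preim memv_X10 memv0.
Qed.

Lemma sumc_preim_img : sumc_preim (sumc V @: Rsp Ys) = Rsp Ys.
Proof.
apply/vspaceP=> f; rewrite memv_sumc_preim.
by apply/andP/idP => [[]//|fR]; rewrite fR memv_img.
Qed.

Lemma sumc_preimI (S T : {vspace V}) :
  sumc_preim (S :&: T) = sumc_preim S :&: sumc_preim T.
Proof.
apply/vspaceP=> f; rewrite memv_cap !memv_sumc_preim memv_cap.
by rewrite andbACA andbb.
Qed.

Lemma sumc_preimD (S T : {vspace V}) : (S <= sumc V @: Rsp Ys) ->
  sumc_preim (S + T) = sumc_preim S + sumc_preim T.
Proof.
move=> sS; apply/vspaceP=> f; apply/idP/memv_addP.
  rewrite memv_sumc_preim => /andP[fR /memv_addP[s sS' [t tT fst]]].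
  have /memv_imgP[g gR sg] := subvP sS s sS'.
  exists g; first by rewrite memv_sumc_preim gR -sg.
  exists (f - g); last by rewrite addrC subrK.
  by rewrite memv_sumc_preim memvB // linearB /= fst sg addrC addKr.
move=> [g gS [h hT ->]]; move: gS hT; rewrite !memv_sumc_preim.
by move=> /andP[gR gS] /andP[hR hT]; rewrite memvD // linearD /= memv_add.
Qed.

Lemma X10_addv_injc (i : 'I_3) (S : {vspace V}) : (S <= Ys i) ->
  X10 Ys + injc V i @: S = sumc_preim S.
Proof.
move=> sS; apply/vspaceP=> f; rewrite memv_sumc_preim; apply/memv_addP/andP.
  move=> [x]; rewrite memv_X10 => /andP[xR /eqP x0] [y /memv_imgP[s sS' ->] ->].
  by rewrite memvD ?injc_Rsp ?(subvP sS) // linearD /= x0 add0r sumc_injc.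
move=> [fR fS]; exists (f - injc V i (sumc V f)).
  by rewrite memv_X10 memvB ?injc_Rsp ?(subvP sS) //= linearB /= sumc_injc subrr.
by exists (injc V i (sumc V f)); rewrite ?memv_img ?subrK.
Qed.

Lemma Gsp_capv_addv_Hpsp (i : 'I_3) (W : {vspace trip V}) : (W <= Rsp Ys) ->
  Gsp Ys i :&: (Hpsp Ys i + W) = injc V i @: (projc V i @: W).
Proof.
move=> sW; apply/vspaceP=> g; apply/memv_capP/memv_imgP.
  move=> [gG /memv_addP[h hH [w wW eg]]].
  exists (w i); first by apply/memv_imgP; exists w; rewrite ?projcE.
  move: hH gG; rewrite memv_Hpsp memv_Gsp => /andP[_ /eqP hi] /andP[_ /forallP g0].
  apply/ffunP=> l; rewrite injcE ffunE; case: eqP => [->|/eqP ne].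
    by rewrite eg ffunE hi add0r.
  by move/implyP: (g0 l) => /(_ ne)/eqP.
move=> [u /memv_imgP[w wW ->] ->]; rewrite projcE.
have wiY := Rsp_coord i (subvP sW w wW).
split.
  rewrite memv_Gsp injcE ffunE eqxx wiY; apply/forallP=> l; apply/implyP=> ne.
  by rewrite ffunE (negbTE ne).
apply/memv_addP; exists (injc V i (w i) - w).
  by rewrite memv_Hpsp memvB ?injc_Rsp ?(subvP sW) //= !ffunE injcE ffunE eqxx subrr.
by exists w => //; rewrite subrK.
Qed.

Lemma Ys_sub_sumc_img (i : 'I_3) : (Ys i <= sumc V @: Rsp Ys).
Proof.
apply/subvP=> y yY; apply/memv_imgP; exists (injc V i y); first exact: injc_Rsp.
by rewrite sumc_injc.
Qed.

(* The representation rho, except that its top is Y_1 + Y_2 + Y_3 (the image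
   of R under the sum map) rather than X_0; the statement never evaluates rho
   at I itself. *)
Definition rho : dterm -> {vspace V} := deval Xs Ys (sumc V @: Rsp Ys).

Hypothesis hXY : forall i : 'I_3, (Xs i <= Ys i).

Lemma rho_sub_sumc_img (a : dterm) : (rho a <= sumc V @: Rsp Ys).
Proof.
elim: a => [l|l||a sa b sb|a sa b sb] /=.
- exact: subv_trans (hXY l) (Ys_sub_sumc_img l).
- exact: Ys_sub_sumc_img.
- exact: subvv.
- exact: subv_trans (capvSl _ _) sa.
- by rewrite subv_add sa sb.
Qed.

Lemma nu0_sumc_preim (a : dterm) : nu0 Xs Ys a = sumc_preim (rho a).
Proof.
elim: a => [l|l||a IHa b IHb|a IHa b IHb].
- exact: X10_addv_injc.
- exact: X10_addv_injc.
- by rewrite sumc_preim_img.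
- by rewrite [RHS]sumc_preimI -IHa -IHb.
- by rewrite [RHS]sumc_preimD ?rho_sub_sumc_img // -IHa -IHb.
Qed.

Lemma nu1_sub_X10 (a : dterm) : (nu1 Xs Ys a <= X10 Ys).
Proof.
elim: a => [l|l||a sa b sb|a sa b sb] /=.
- exact: capvSr.
- exact: capvSr.
- exact: subvv.
- exact: subv_trans (capvSl _ _) sa.
- by rewrite subv_add sa sb.
Qed.

Lemma nu1_sub_Rsp (a : dterm) : (nu1 Xs Ys a <= Rsp Ys).
Proof. exact: subv_trans (nu1_sub_X10 a) (capvSl _ _). Qed.

Lemma psi_sumc_preim (i : 'I_3) (a : dterm) :
  psi Xs Ys i a = sumc_preim (projc V i @: nu1 Xs Ys a).
Proof.
rewrite /psi Gsp_capv_addv_Hpsp ?nu1_sub_Rsp // X10_addv_injc //.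
apply/subvP=> v /memv_imgP[w wW ->]; rewrite projcE.
exact: Rsp_coord (subvP (nu1_sub_Rsp a) w wW).
Qed.

Definition box (Z : 'I_3 -> {vspace V}) : {vspace trip V} :=
  X10 Ys :&: \bigcap_(l < 3) (projc V l @^-1: Z l).

Lemma memv_box (Z : 'I_3 -> {vspace V}) (w : trip V) :
  (w \in box Z) = (w \in X10 Ys) && [forall l, w l \in Z l].
Proof.
rewrite /box memv_cap memvE; congr (_ && _); apply/subv_bigcapP/forallP.
  by move=> wZ l; rewrite -projcE memv_preim memvE wZ.
by move=> wZ l _; rewrite -memvE -memv_preim projcE.
Qed.

Lemma box_capv (Z Z' : 'I_3 -> {vspace V}) :
  box Z :&: box Z' = box (fun l => Z l :&: Z' l).
Proof.
apply/vspaceP=> w; rewrite memv_cap !memv_box andbACA andbb.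
congr (_ && _); apply/andP/forallP => [[/forallP wZ /forallP wZ'] l|wZZ'].
  by rewrite memv_cap wZ wZ'.
by split; apply/forallP=> l; have := wZZ' l; rewrite memv_cap => /andP[].
Qed.

Definition boxat (l : 'I_3) (S : {vspace V}) : 'I_3 -> {vspace V} :=
  fun m => if m == l then S else fullv.

Lemma memv_box_at (l : 'I_3) (S : {vspace V}) (w : trip V) :
  (w \in box (boxat l S)) = (w \in X10 Ys) && (w l \in S).
Proof.
rewrite memv_box /boxat; congr (_ && _); apply/forallP/idP => [/(_ l)|wS m].
  by rewrite eqxx.
by case: eqP => [->|_]; rewrite ?memvf.
Qed.

Lemma nu1_tx (l : 'I_3) : nu1 Xs Ys (tx l) = box (boxat l 0).
Proof.
apply/vspaceP=> w; rewrite memv_box_at /= memv_cap memv_Hpsp memv_X10 memv0.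
by case: (w \in Rsp Ys) => //=; rewrite andbC.
Qed.

Lemma nu1_ty (l : 'I_3) : nu1 Xs Ys (ty l) = box (boxat l (Xs l)).
Proof.
apply/vspaceP=> w; rewrite memv_box_at /= memv_cap memv_Gpsp memv_X10.
by case: (w \in Rsp Ys) => //=; rewrite andbC.
Qed.

Lemma nu1_tI : nu1 Xs Ys tI = box (fun => fullv).
Proof.
apply/vspaceP=> w; rewrite memv_box /=.
by rewrite [[forall l, _]](_ : _ = true) ?andbT //; apply/forallP=> l; rewrite memvf.
Qed.

Section Projection.
Variables (i j k : 'I_3).
Hypotheses (hij : i != j) (hik : i != k) (hjk : j != k).

Lemma projc_box (Z : 'I_3 -> {vspace V}) :
  projc V i @: box Z = Ys i :&: Z i :&: (Ys j :&: Z j + Ys k :&: Z k).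
Proof.
apply/vspaceP=> v; apply/memv_imgP/idP.
  move=> [w]; rewrite memv_box memv_X10 => /andP[/andP[wR ws] /forallP wZ] ->.
  rewrite projcE !memv_cap Rsp_coord // wZ.
  have -> : w i = (- w j + - w k)%R.
    apply/eqP; rewrite -subr_eq0 opprD !opprK addrA.
    by rewrite sumcE (big_ord3_distinct _ hij hik hjk) in ws.
  by rewrite memv_add // memvN memv_cap Rsp_coord ?wZ.
rewrite !memv_cap => /andP[/andP[vY vZ] /memv_addP[a aA [b bB ev]]]; subst v.
move: aA bB; rewrite !memv_cap => /andP[aY aZ] /andP[bY bZ].
have ji : (j == i) = false by rewrite eq_sym (negbTE hij).
have ki : (k == i) = false by rewrite eq_sym (negbTE hik).
have kj : (k == j) = false by rewrite eq_sym (negbTE hjk).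
exists ([ffun l => if l == i then (a + b)%R else if l == j then - a else - b] : trip V);
  last by rewrite projcE ffunE eqxx.
rewrite memv_box memv_X10 sumcE (big_ord3_distinct _ hij hik hjk) !ffunE.
rewrite eqxx ji kj ki eqxx addrAC addrK subrr eqxx andbT memv_Rsp.
apply/andP; split; apply/forallP=> l; rewrite ffunE;
  by case: (ord3_distinct_cases l hij hik hjk) => ->; rewrite ?eqxx ?ji ?ki ?kj ?memvN.
Qed.

Lemma psi_box (a : dterm) (Z : 'I_3 -> {vspace V}) : nu1 Xs Ys a = box Z ->
  psi Xs Ys i a = sumc_preim (Ys i :&: Z i :&: (Ys j :&: Z j + Ys k :&: Z k)).
Proof. by move=> nu1a; rewrite psi_sumc_preim nu1a projc_box. Qed.

End Projection.
End Construction.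

Theorem mainTheorem2 (K : fieldType) (V : vectType K)
    (Xs Ys : 'I_3 -> {vspace V})
    (hXY : forall i : 'I_3, (Xs i <= Ys i)%VS)
    (i j k : 'I_3) (hij : i != j) (hik : i != k) (hjk : j != k) :
  (psi Xs Ys i (tx i) = X10 Ys) /\
     (
      psi Xs Ys i (tx j) = nu0 Xs Ys (tmeet (ty i) (ty k))
        /\ psi Xs Ys k (tx j) = nu0 Xs Ys (tmeet (ty i) (ty k))) /\
     (psi Xs Ys i (ty i) = nu0 Xs Ys (tmeet (tx i) (tjoin (ty j) (ty k)))) /\
     (psi Xs Ys i (ty j) = nu0 Xs Ys (tmeet (ty i) (tjoin (tx j) (ty k)))) /\
     (psi Xs Ys i tI = nu0 Xs Ys (tmeet (ty i) (tjoin (ty j) (ty k)))) /\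
     (psi Xs Ys i (tmeet (ty j) (ty k)) = nu0 Xs Ys (tmeet (ty i) (tjoin (tx j) (tx k)))).
Proof.
have hji : j != i by rewrite eq_sym.
have hki : k != i by rewrite eq_sym.
have hkj : k != j by rewrite eq_sym.
have ne := (negbTE hij, negbTE hik, negbTE hjk, negbTE hji, negbTE hki, negbTE hkj).
have nu1_tyjk : nu1 Xs Ys (tmeet (ty j) (ty k)) =
    box Ys (fun l => boxat j (Xs j) l :&: boxat k (Xs k) l).
  by rewrite -box_capv -!nu1_ty.
rewrite !nu0_sumc_preim // /rho /=.
rewrite (psi_box hij hik hjk (nu1_tx Xs Ys i)) (psi_box hij hik hjk (nu1_tx Xs Ys j)).
rewrite (psi_box hki hkj hij (nu1_tx Xs Ys j)) (psi_box hij hik hjk (nu1_ty Xs Ys i)).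
rewrite (psi_box hij hik hjk (nu1_ty Xs Ys j)) (psi_box hij hik hjk (nu1_tI Xs Ys)).
rewrite (psi_box hij hik hjk nu1_tyjk) /boxat !eqxx !ne.
rewrite !(capvf, capv0, cap0v, capfv, add0v, addv0).
rewrite !(capv_idPr (hXY _)) (capvC (Ys k)) sumc_preim0.
by do !split.
Qed.
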